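(* Let $(a,b,c,\lambda)\in(\mathbb F^\times)^4$ and let $O$ be a $\triangle_q$-submodule of $M_\lambda(a,b,c)$ with $m_0\notin O$. Then: (i) $m_0+O$ is a marginal weight vector of $M_\lambda(a,b,c)/O$ with weight $b\lambda^{-1}$; (ii) $m_0+O$ is a marginal weight vector of $M_\lambda(a,b,c)/O$ with weight $b^{-1}\lambda$ if and only if $b\lambda^{-1}=b^{-1}\lambda$, or $m_0+O$ and $m_1+O$ are linearly dependent.
   Context: $\mathbb F$ is an algebraically closed field and $q\in\mathbb F^\times$ a root of unity of order $d\notin\{1,2,4\}$. $\triangle_q$ is the unital associative $\mathbb F$-algebra with generators $A,B,C$ subject to: each of $A+\frac{qBC-q^{-1}CB}{q^2-q^{-2}}$, $B+\frac{qCA-q^{-1}AC}{q^2-q^{-2}}$, $C+\frac{qAB-q^{-1}BA}{q^2-q^{-2}}$ is central; $\alpha,\beta,\gamma$ are these times $q+q^{-1}$. For a $\triangle_q$-module $V$ and $\mu\in\mathbb F^\times$ let $V(\mu)=\{v\in V: Bv=(\mu+\mu^{-1})v\}$; a marginal weight vector of $V$ with weight $\mu$ is a nonzero $v\in V(\mu)$ that is an eigenvector of $(B-\mu q^2-\mu^{-1}q^{-2})A$. For $(a,b,c,\lambda)\in(\mathbb F^\times)^4$, $i\in\mathbb N$: $\theta_i=a\lambda^{-1}q^{2i}+a^{-1}\lambda q^{-2i}$, $\theta_i^*=b\lambda^{-1}q^{2i}+b^{-1}\lambda q^{-2i}$, $\varphi_i=a^{-1}b^{-1}\lambda q(q^i-q^{-i})(\lambda^{-1}q^{i-1}-\lambda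 q^{1-i})(q^{-i}-abc\lambda^{-1}q^{i-1})(q^{-i}-abc^{-1}\lambda^{-1}q^{i-1})$. $M_\lambda(a,b,c)$ is the $\triangle_q$-module with basis $\{m_i\}_{i\in\mathbb N}$, $(A-\theta_i)m_i=m_{i+1}$, $(B-\theta_i^* )m_i=\varphi_im_{i-1}$, with $\alpha,\beta,\gamma$ acting as $(b+b^{-1})(c+c^{-1})+(a+a^{-1})(\lambda q+\lambda^{-1}q^{-1})$, $(c+c^{-1})(a+a^{-1})+(b+b^{-1})(\lambda q+\lambda^{-1}q^{-1})$, $(a+a^{-1})(b+b^{-1})+(c+c^{-1})(\lambda q+\lambda^{-1}q^{-1})$. *)

From mathcomp Require Import all_boot all_algebra.
Set Implicit Arguments. Unset Strict Implicit. Unset Printing Implicit Defensive.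
Import GRing.Theory.
Local Open Scope ring_scope.

(* The module M_lambda(a,b,c) is realised on the F-vector space {poly F}:
   the basis vector m_i is the monomial 'X^i, so a vector is a finite
   F-linear combination of the m_i. *)

Section MLambda.
Variables (F : fieldType) (q a b c lam : F).

Definition theta (i : nat) : F :=
  a * lam^-1 * q ^+ (2 * i) + a^-1 * lam * q ^- (2 * i).
Definition thetas (i : nat) : F :=
  b * lam^-1 * q ^+ (2 * i) + b^-1 * lam * q ^- (2 * i).
Definition phi (i : nat) : F :=
  a^-1 * b^-1 * lam * q * (q ^+ i - q ^- i)
  * (lam^-1 * q ^ (i%:Z - 1) - lam * q ^ (1 - i%:Z))
  * (q ^- i - a * b * c * lam^-1 * q ^ (i%:Z - 1))
  * (q ^- i - a * b * c^-1 * lam^-1 * q ^ (i%:Z - 1)).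

Definition mvec (i : nat) : {poly F} := 'X^i.

Definition Aop (p : {poly F}) : {poly F} :=
  \sum_(0 <= i < size p) p`_i *: (theta i *: 'X^i + 'X^(i.+1)).
(* (B - theta*_i) m_i = phi_i m_{i-1}   (phi_0 = 0, so m_{-1} never occurs) *)
Definition Bop (p : {poly F}) : {poly F} :=
  \sum_(0 <= i < size p) p`_i *: (thetas i *: 'X^i + phi i *: 'X^(i.-1)).

Definition gamma_sc : F :=
  (a + a^-1) * (b + b^-1) + (c + c^-1) * (lam * q + lam^-1 * q^-1).

(* C is determined by the centrality of
   C + (qAB - q^-1 BA)/(q^2 - q^-2) = gamma/(q + q^-1). *)
Definition Cop (p : {poly F}) : {poly F} :=
  (gamma_sc / (q + q^-1)) *: p
  - (q ^+ 2 - q ^- 2)^-1 *: (q *: Aop (Bop p) - q^-1 *: Bop (Aop p)).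

Definition submodule (O : {poly F} -> Prop) : Prop :=
  [/\ O 0,
      (forall u v, O u -> O v -> O (u + v)),
      (forall (k : F) u, O u -> O (k *: u)) &
      [/\ (forall u, O u -> O (Aop u)),
           (forall u, O u -> O (Bop u)) &
           (forall u, O u -> O (Cop u))]].

Definition marginal_weight_vector_quot (O : {poly F} -> Prop) (mu : F)
    (v : {poly F}) : Prop :=
  [/\ ~ O v,
      O (Bop v - (mu + mu^-1) *: v) &
      exists k : F,
        O (Bop (Aop v) - (mu * q ^+ 2 + mu^-1 * q ^- 2) *: Aop v - k *: v)].

Definition lin_dep_quot (O : {poly F} -> Prop) (u v : {poly F}) : Prop :=
  exists x y : F, (x != 0 \/ y != 0) /\ O (x *: u + y *: v).

End MLambda.

(** Only [m_0] and [m_1] are involved: [B m_0 = theta*_0 m_0] and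
    [(B - s) A m_0 = (theta_0 theta*_0 + phi_1 - s theta_0) m_0 + (theta*_1 - s) m_1].
    With [mu = b lambda^-1] we have [theta*_i = mu q^(2i) + mu^-1 q^(-2i)], so both
    [mu] and [mu^-1] are weights of [m_0].  The [m_1]-coefficient
    [theta*_1 - nu q^2 - nu^-1 q^-2] vanishes for [nu = mu] and equals
    [(mu - mu^-1)(q^2 - q^-2)] for [nu = mu^-1].  Since [q^4 <> 1] it vanishes
    iff [mu = mu^-1]; otherwise the eigenvector condition says exactly that
    [m_1 + O] lies on the line through [m_0 + O]. *)
From mathcomp Require Import all_boot all_algebra.
From mathcomp Require Import ring.
Set Implicit Arguments. Unset Strict Implicit. Unset Printing Implicit Defensive.
Import GRing.Theory.
Local Open Scope ring_scope.

Section BasisExtension.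
Variable F : fieldType.

Definition basis_ext (f : nat -> {poly F}) (p : {poly F}) : {poly F} :=
  \sum_(0 <= i < size p) p`_i *: f i.

Lemma basis_ext_widen f (p : {poly F}) n :
  (size p <= n)%N -> basis_ext f p = \sum_(0 <= i < n) p`_i *: f i.
Proof.
move=> le_pn; rewrite /basis_ext (big_cat_nat (leq0n _) le_pn) /=.
rewrite [X in _ + X]big1_seq ?addr0 // => i /andP[_].
by rewrite mem_index_iota => /andP[le_pi _]; rewrite nth_default ?scale0r.
Qed.

Lemma basis_ext_linear f (k : F) (u v : {poly F}) :
  basis_ext f (k *: u + v) = k *: basis_ext f u + basis_ext f v.
Proof.
set n := maxn (size u) (size v).
have le_kuv : (size (k *: u + v)%R <= n)%N.
  rewrite (leq_trans (size_polyD _ _)) // geq_max leq_maxr.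
  by rewrite leq_max size_scale_leq.
rewrite (basis_ext_widen f le_kuv) (basis_ext_widen f (leq_maxl _ _ : size u <= n)%N).
rewrite (basis_ext_widen f (leq_maxr _ _ : size v <= n)%N) scaler_sumr -big_split /=.
by apply: eq_bigr => i _; rewrite coefD coefZ scalerDl scalerA.
Qed.

Lemma basis_ext_Xn f i : basis_ext f 'X^i = f i.
Proof.
rewrite /basis_ext size_polyXn big_nat_recr //= coefXn eqxx scale1r.
rewrite big1_seq ?add0r // => j /andP[_].
by rewrite mem_index_iota coefXn => /andP[_ /ltn_eqF ->]; rewrite scale0r.
Qed.

End BasisExtension.

Section ActionOnM0.
Variables (F : fieldType) (q a b c lam : F).

Local Notation m := (mvec F).
Local Notation A := (Aop q a lam).
Local Notation B := (Bop q a b c lam).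
Local Notation theta := (theta q a lam).
Local Notation thetas := (thetas q b lam).
Local Notation phi := (phi q a b c lam).

Lemma phi0 : phi 0 = 0.
Proof. by rewrite /phi !expr0 invr1 subrr !mulr0 !mul0r. Qed.

Lemma Aop_mvec i : A (m i) = theta i *: m i + m i.+1.
Proof. exact: basis_ext_Xn. Qed.

Lemma Bop_mvec i : B (m i) = thetas i *: m i + phi i *: m i.-1.
Proof. exact: basis_ext_Xn. Qed.

Lemma Bop_linear (k : F) u v : B (k *: u + v) = k *: B u + B v.
Proof. exact: basis_ext_linear. Qed.

Lemma Bop_mvec0 : B (m 0) = thetas 0 *: m 0.
Proof. by rewrite Bop_mvec phi0 scale0r addr0. Qed.

Lemma Bop_Aop_mvec0 (s k : F) :
  B (A (m 0)) - s *: A (m 0) - k *: m 0 =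
  (theta 0 * thetas 0 + phi 1 - s * theta 0 - k) *: m 0 + (thetas 1 - s) *: m 1.
Proof.
rewrite Aop_mvec Bop_linear Bop_mvec0 Bop_mvec /=.
rewrite scalerDr !scalerA !scalerBl !scalerDl; ring.
Qed.

Lemma thetasE i :
  thetas i = b * lam^-1 * q ^+ (2 * i) + (b * lam^-1)^-1 * q ^- (2 * i).
Proof. by rewrite /thetas invfM invrK mulrC. Qed.

End ActionOnM0.

Section Quotient.
Variables (F : fieldType) (O : {poly F} -> Prop).
Hypotheses (O0 : O 0) (OZ : forall (k : F) u, O u -> O (k *: u)).

Lemma lin_dep_quot_iff (u v : {poly F}) (e : F) : ~ O u ->
  (exists k, O (k *: u + e *: v)) <-> e = 0 \/ lin_dep_quot O u v.
Proof.
move=> Ou; split=> [[k Okuv] | [-> | [x [y [xy_neq0 Oxy]]]]].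
- have [-> | e_neq0] := eqVneq e 0; [by left | right].
  by exists k, e; split; first right.
- by exists 0; rewrite !scale0r addr0.
- have y_neq0 : y != 0.
    apply/eqP => y0; apply: Ou; case: xy_neq0 => [x_neq0 | ]; last by rewrite y0 eqxx.
    move: Oxy; rewrite y0 scale0r addr0 => /(OZ x^-1).
    by rewrite scalerA mulVf // scale1r.
  exists (e * x / y); move: Oxy => /(OZ (e / y)).
  by rewrite scalerDr !scalerA mulrAC divfK.
Qed.

End Quotient.

Section MarginalM0.
Variables (F : fieldType) (q a b c lam : F) (O : {poly F} -> Prop).
Hypotheses (O0 : O 0) (Om0 : ~ O (mvec F 0)).

Local Notation m := (mvec F).
Local Notation thetas := (thetas q b lam).

Lemma marginal_mvec0P (mu : F) : mu + mu^-1 = thetas 0 ->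
  marginal_weight_vector_quot q a b c lam O mu (m 0) <->
  exists k, O (k *: m 0 + (thetas 1 - (mu * q ^+ 2 + mu^-1 * q ^- 2)) *: m 1).
Proof.
move=> mu_weight; split=> [[_ _ [k]] | [k Ok]].
  by rewrite Bop_Aop_mvec0 => Ok; eexists; exact: Ok.
split=> //; first by rewrite Bop_mvec0 -scalerBl mu_weight subrr scale0r.
exists (theta q a lam 0 * thetas 0 + phi q a b c lam 1
        - (mu * q ^+ 2 + mu^-1 * q ^- 2) * theta q a lam 0 - k).
by rewrite Bop_Aop_mvec0 subKr.
Qed.

End MarginalM0.

Lemma prim_root_expr2_neq_exprN2 (F : fieldType) (q : F) (d : nat) :
  d.-primitive_root q -> d \notin [:: 1%N; 2%N; 4%N] -> q ^+ 2 != q ^- 2.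
Proof.
move=> q_prim d_not_dvd4; apply: contra d_not_dvd4 => /eqP q2V.
have q_neq0 : q != 0 by rewrite (prim_root_eq0 q_prim) -lt0n (prim_order_gt0 q_prim).
have : q ^+ 4 == 1 by rewrite (exprD q 2 2) {2}q2V mulfV // expf_neq0.
rewrite -(prim_order_dvd q_prim).
by case: d {q_prim} => [|[|[|[|[|]]]]].
Qed.

Theorem lemma3p5 (F : closedFieldType) (q : F) (d : nat)
  (Hq : d.-primitive_root q) (Hd : d \notin [:: 1%N; 2%N; 4%N])
  (a b c lam : F) (Ha : a != 0) (Hb : b != 0) (Hc : c != 0) (Hl : lam != 0)
  (O : {poly F} -> Prop) (HO : submodule q a b c lam O)
  (Hm0 : ~ O (mvec F 0)) :
  marginal_weight_vector_quot q a b c lam O (b * lam^-1) (mvec F 0) /\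
  (marginal_weight_vector_quot q a b c lam O (b^-1 * lam) (mvec F 0) <->
     (b * lam^-1 = b^-1 * lam \/ lin_dep_quot O (mvec F 0) (mvec F 1))).
Proof.
case: HO => O0 _ OZ _.
have q2_neq_qN2 := prim_root_expr2_neq_exprN2 Hq Hd.
have inv_weight : (b * lam^-1)^-1 = b^-1 * lam by rewrite invfM invrK.
have thetas0 : thetas q b lam 0 = b * lam^-1 + b^-1 * lam.
  by rewrite thetasE muln0 !expr0 invr1 !mulr1 inv_weight.
have thetas1 := thetasE q b lam 1; rewrite muln1 inv_weight in thetas1.
split.
  apply/marginal_mvec0P => //; first by rewrite inv_weight thetas0.
  by exists 0; rewrite thetas1 inv_weight subrr !scale0r addr0.
have inv_weight_sum : b^-1 * lam + (b^-1 * lam)^-1 = thetas q b lam 0.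
  by rewrite thetas0 -inv_weight invrK addrC.
rewrite marginal_mvec0P // lin_dep_quot_iff //.
have -> : thetas q b lam 1 - (b^-1 * lam * q ^+ 2 + (b^-1 * lam)^-1 * q ^- 2)
          = (b * lam^-1 - b^-1 * lam) * (q ^+ 2 - q ^- 2).
  by rewrite thetas1 -inv_weight invrK; ring.
apply: or_iff_compat_r; split=> [/eqP | ->]; last by rewrite subrr mul0r.
by rewrite mulf_eq0 !subr_eq0 (negbTE q2_neq_qN2) orbF => /eqP.
Qed.
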